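(* For $n\ge 4$, the polynomials $W_n(t)=\sum_{\sigma\in\{-1,1\}^n} t^{\nu_W(\sigma)}$ satisfy \[ W_n(t)=W_{n-1}(t)+2W_{n-2}(t)+2(t-1)W_{n-3}(t). \]
   Context: Seating model. A circular table has $n\ge 1$ seats, with exactly one napkin between each pair of adjacent seats ($n$ napkins in total). ''Left'' and ''right'' are from the perspective of a seated diner. Diners $1,\dots,n$ arrive in this order and a maitre d' chooses a seat for each. A preference order is $\sigma=(\sigma_1,\dots,\sigma_n)\in\{-1,1\}^n$, where $\sigma_j=+1$ means diner $j$ prefers the napkin on their right and $\sigma_j=-1$ the napkin on their left. When diner $j$ is seated, they take their preferred adjacent napkin if it is still on the table; otherwise the other adjacent napkin if still on the table; otherwise they are napkinless. The maitre d' observes which napkin each seated diner takes. The ''previous diner'' means the most recently seated diner. Algorithm $W$ (trap setting). Seat diner 1; the primary direction $d\in\{\text{left},\text{right}\}$ is the side of the napkin diner 1 takes. All movement below is in direction $d$. (W1) If the two seats at distance 1 and 2 in direction $d$ from the previous diner's seat are both empty, go to W2; otherwise go to W4. (W2) If the previous diner took the napkin on their side $d$, seat the next diner two seats in direction $d$ from the previous diner and return to W1; otherwise go to W3. (W3) Seat the next diner one seat in direction $d$ from the previous diner and return to W1. (W4) Seat all remaining diners, one at a time in order of arrival, in the empty seats, in the order in which these seats are encountered moving in direction $d$ starting from diner 1's seat. $\nu_W(\sigma)$ is the number of napkinless diners when the $n$ diners with preference order $\sigma$ are seated at the circular table with $n$ seats by algorithm $W$, and $W_n(t)=\sum_{\sigma\in\{-1,1\}^n}t^{\nu_W(\sigma)}$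 (so e.g. $W_1(t)=2$, $W_2(t)=4$, $W_3(t)=4+4t$). *)

From mathcomp Require Import all_boot all_order all_algebra.
Set Implicit Arguments. Unset Strict Implicit. Unset Printing Implicit Defensive.
Import GRing.Theory.
Local Open Scope ring_scope.

(* Seats and napkins are numbered 0..n-1 (mod n).  Napkin i lies
   between seat i and seat i+1.  A diner at seat s has napkin s on the RIGHT
   and napkin s-1 (mod n) on the LEFT; moving "right" means s -> s+1 (mod n).
   A direction / napkin side / preference is encoded by a bool:
   true = right (+1), false = left (-1).  A napkin table is a seq bool of
   size n (true = napkin still on the table); occupancy is a seq bool of size
   n (true = seat occupied).  By rotational symmetry diner 1 sits at seat 0. *)

Definition stepd (n : nat) (d : bool) (s : nat) : nat :=
  if d then (s.+1 %% n)%N else ((s + n.-1) %% n)%N.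

Definition napk (n : nat) (side : bool) (s : nat) : nat :=
  if side then (s %% n)%N else ((s + n.-1) %% n)%N.

Definition seat_diner (n : nat) (nap : seq bool) (s : nat) (p : bool)
  : seq bool * option bool :=
  let a := napk n p s in
  if nth false nap a then (set_nth false nap a false, Some p)
  else let b := napk n (~~ p) s in
       if nth false nap b then (set_nth false nap b false, Some (~~ p))
       else (nap, None).

(* Step W4: seat remaining diners, in order, in the given seats. Accumulates
   the number of napkinless diners. *)
Fixpoint fill (n : nat) (nap : seq bool) (seats : seq nat) (ps : seq bool)
  (cnt : nat) : nat :=
  match ps, seats with
  | p :: ps', s :: seats' =>
      let r := seat_diner n nap s p in
      fill n r.1 seats' ps' (cnt + (r.2 == None))%N
  | _, _ => cnt
  end.

Definition empty_seats (n : nat) (d : bool) (occ : seq bool) : seq nat :=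
  [seq s <- [seq iter k (stepd n d) 0%N | k <- iota 1 n.-1] | ~~ nth true occ s].

(* Steps W1-W3 (then W4). [prev] is the previous diner's seat, [took] the side
   of the napkin the previous diner took. *)
Fixpoint trap (n : nat) (d : bool) (occ nap : seq bool) (prev : nat)
  (took : option bool) (ps : seq bool) (cnt : nat) : nat :=
  match ps with
  | [::] => cnt
  | p :: ps' =>
      let s1 := stepd n d prev in
      let s2 := stepd n d s1 in
      if ~~ nth true occ s1 && ~~ nth true occ s2 then
        let s := if took == Some d then s2 else s1 in
        let r := seat_diner n nap s p in
        trap n d (set_nth true occ s true) r.1 s r.2 ps' (cnt + (r.2 == None))%N
      else fill n nap (empty_seats n d occ) ps cnt
  end.

Definition nuW (n : nat) (sigma : seq bool) : nat :=
  match sigma with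
  | [::] => 0%N
  | p :: ps =>
      let r := seat_diner n (nseq n true) 0 p in
      let d := if r.2 is Some x then x else p in
      trap n d (set_nth false (nseq n false) 0 true) r.1 0 r.2 ps
        (r.2 == None)
  end.

Definition Wpoly (n : nat) : {poly int} :=
  \sum_(sigma : n.-tuple bool) 'X^(nuW n sigma).

Definition nu_list (n : nat) : seq nat :=
  [seq nuW n (val s) | s : n.-tuple bool].

From mathcomp Require Import all_boot all_order all_algebra.
From mathcomp Require Import zify ring.

Set Implicit Arguments.
Unset Strict Implicit.
Unset Printing Implicit Defensive.

Import GRing.Theory.

(* Put diner 1 at seat 0 and number seats and napkins linearly in the primary
   direction d, napkin j lying between seats j and j.+1.  While the trap runs,
   every seat behind the last diner is occupied or an isolated empty seat, and
   every napkin ahead of him is still on the table.  Trapped diners always get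
   a napkin; a seat skipped in W2 loses both of its napkins exactly when the
   next diner prefers the napkin pointing back, and these stranded seats are
   exactly the napkinless diners of W4.  So nu_W only depends on the
   preferences relative to diner 1's, through the recursion [trap_loss].  Its
   generating functions a_m (the previous diner took the napkin in direction
   d, so the next one skips a seat) and b_m (the next one moves one seat)
   satisfy W_{m+1} = 2 a_m, a_{m+2} = 2 a_m + 2t b_m and b_{m+1} = a_m + b_m;
   eliminating b gives the recurrence. *)

Lemma filter_iota_pairwise (P : pred nat) a k :
  (forall i, a <= i -> i.+1 < a + k -> ~~ (P i && P i.+1)) ->
  pairwise (fun i j => i.+1 < j) (filter P (iota a k)).
Proof.
elim: k a => [|k IH] a no_pair //=.
have IH' : pairwise (fun i j => i.+1 < j) (filter P (iota a.+1 k)).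
  by apply: IH => i a_le i_lt; apply: no_pair; lia.
case: ifP => Pa //=; rewrite IH' andbT.
apply/allP => j; rewrite mem_filter mem_iota => /andP[Pj /andP[a_lt j_lt]].
case: (ltngtP a.+1 j) => // [|ja]; first by lia.
by move: (no_pair a (leqnn a)) Pj; rewrite Pa -ja => /= /[swap] ->; lia.
Qed.

(* [m] seats are left ahead of the previous diner before seat 0, [c] says
   whether that diner took the napkin in direction d, and [qs] whether each of
   the remaining diners prefers the napkin in direction d. *)
Fixpoint trap_loss (m : nat) (c : bool) (qs : seq bool) : nat :=
  match qs with
  | [::] => 0
  | q :: qs' => if 2 <= m then (c && ~~ q) + trap_loss (m - (if c then 2 else 1)) q qs' else 0
  end.

Lemma trap_loss_cons m c q qs : 2 <= m ->
  trap_loss m c (q :: qs) = (c && ~~ q) + trap_loss (m - (if c then 2 else 1)) q qs.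
Proof. by move=> /= ->. Qed.

Lemma trap_loss_short m c qs : m < 2 -> trap_loss m c qs = 0.
Proof. by case: qs => //= q qs; case: ifP => //; lia. Qed.

Section Seating.
Variables (n : nat) (d : bool).
Hypothesis n_gt0 : 0 < n.

Lemma modn_add_pred a : a < n -> (a + n.-1) %% n = if a == 0 then n.-1 else a.-1.
Proof.
move=> a_lt; case: eqP => [->|/eqP a_neq0]; first by rewrite add0n modn_small //; lia.
by rewrite (_ : a + n.-1 = a.-1 + n); [rewrite modnDr modn_small //; lia | lia].
Qed.

(* [pos i] is the seat i steps from seat 0 in direction d, and [nid j] the
   napkin between the seats [pos j] and [pos j.+1]. *)
Definition pos i := iter i (stepd n d) 0.
Definition nid j := if d then j else n.-1 - j.
Definition pref_napkin (y : bool) i := if y == d then i else i.-1.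

Lemma posE i : i < n -> pos i = if d then i else (n - i) %% n.
Proof.
elim: i => [|i IH] i_lt; first by case: d; rewrite // subn0 modnn.
rewrite /pos iterS -/(pos i) IH; last lia.
rewrite /stepd; case: d; first by rewrite modn_small.
have [->|i_gt0] := posnP i; first by rewrite subn0 modnn add0n subn1.
rewrite (modn_small (_ : n - i < n)); last lia.
rewrite modn_add_pred; last lia.
rewrite modn_small; last lia.
by case: eqP => //; lia.
Qed.

Lemma pos_lt i : i < n -> pos i < n.
Proof. by move=> i_lt; rewrite posE //; case: d => //; rewrite ltn_mod. Qed.

Lemma pos_inj i j : i < n -> j < n -> pos i = pos j -> i = j.
Proof.
move=> i_lt j_lt; rewrite !posE //; case: d => //.
have [->|i_gt0] := posnP i; have [->|j_gt0] := posnP j; rewrite ?subn0 ?modnn //;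
  rewrite ?modn_small; lia.
Qed.

Lemma pos_n : pos n = pos 0.
Proof.
have def_n : n = n.-1.+1 by lia.
rewrite {1}def_n /pos iterS -/(pos n.-1) posE; last lia.
rewrite /stepd; case: d; first by rewrite -def_n modnn.
rewrite (_ : n - n.-1 = 1); last lia.
rewrite modn_add_pred; last by rewrite ltn_mod.
by case: (ltngtP n 1) => [|n_gt1|->]; [lia | rewrite modn_small | rewrite modnn].
Qed.

Lemma nid_lt j : j < n -> nid j < n.
Proof. by rewrite /nid; case: d => //; lia. Qed.

Lemma nid_inj i j : i < n -> j < n -> nid i = nid j -> i = j.
Proof. by rewrite /nid; case: d => //; lia. Qed.

Lemma napk_pos0 : napk n d (pos 0) = nid 0.
Proof. by rewrite /napk /nid /=; case: d; rewrite ?mod0n ?add0n ?modn_small //; lia. Qed.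

Lemma napk_pos y i : 0 < i < n -> napk n y (pos i) = nid (pref_napkin y i).
Proof.
move=> /andP[i_gt0 i_lt]; rewrite posE // /napk /nid /pref_napkin.
case: d; case: y => //=.
- by rewrite modn_small.
- by rewrite modn_add_pred //; case: eqP => //; lia.
- by rewrite modn_mod modn_small; lia.
- rewrite (modn_small (_ : n - i < n)); last lia.
  by rewrite modn_add_pred; [case: eqP => //; lia | lia].
Qed.

Definition nap_at (nap : seq bool) j := nth false nap (nid j).
Definition occ_at (occ : seq bool) i := nth true occ (pos i).

Lemma nap_at_take nap k j : j < n -> k < n ->
  nap_at (set_nth false nap (nid k) false) j = (j != k) && nap_at nap j.
Proof.
move=> j_lt k_lt; rewrite /nap_at nth_set_nth /=.
case: eqP => [/nid_inj -> //|]; first by rewrite eqxx.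
by case: eqP => // ->.
Qed.

Lemma occ_at_sit occ k i : i < n -> k < n ->
  occ_at (set_nth true occ (pos k) true) i = (i == k) || occ_at occ i.
Proof.
move=> i_lt k_lt; rewrite /occ_at nth_set_nth /=.
case: eqP => [/pos_inj -> //|]; first by rewrite eqxx.
by case: eqP => // ->.
Qed.

Definition bare nap i := ~~ nap_at nap i && ~~ nap_at nap i.-1.

Lemma seat_diner_pref nap i y : 0 < i < n -> nap_at nap (pref_napkin y i) ->
  seat_diner n nap (pos i) y =
    (set_nth false nap (nid (pref_napkin y i)) false, Some y).
Proof. by move=> i_in; rewrite /seat_diner napk_pos // /nap_at => ->. Qed.

Lemma seat_diner_napkinless nap i y : 0 < i < n ->
  ((seat_diner n nap (pos i) y).2 == None) = bare nap i.
Proof.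
move=> i_in; rewrite /seat_diner !napk_pos // /pref_napkin /bare -!/(nap_at _ _).
have -> : (~~ y == d) = ~~ (y == d) by case: y; case: d.
by case: (y == d); case: (nap_at nap i); case: (nap_at nap i.-1).
Qed.

Lemma seat_diner_other nap i y j : 0 < i < n -> j < n -> j != i -> j != i.-1 ->
  nap_at (seat_diner n nap (pos i) y).1 j = nap_at nap j.
Proof.
move=> i_in j_lt ji ji1; have i1_lt : i.-1 < n by lia.
rewrite /seat_diner !napk_pos // /pref_napkin -!/(nap_at _ _).
have -> : (~~ y == d) = ~~ (y == d) by case: y; case: d.
have [ji' ji1'] := (negbTE ji, negbTE ji1).
by case: (y == d); do 2?case: ifP => _ /=; rewrite ?nap_at_take ?ji' ?ji1' //; lia.
Qed.

Lemma fill_isolated nap l ps cnt :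
  {in l, forall i, 0 < i < n} -> pairwise (fun i j => i.+1 < j) l ->
  size l <= size ps ->
  fill n nap (map pos l) ps cnt =
    cnt + count (bare nap) l.
Proof.
elim: l nap ps cnt => [|i l IH] nap [|p ps] cnt /=; rewrite ?addn0 //.
move=> l_in /andP[i_before l_pw] l_ps.
have i_in : 0 < i < n by apply: l_in; rewrite inE eqxx.
rewrite IH //; last by move=> j j_l; apply: l_in; rewrite inE j_l orbT.
rewrite seat_diner_napkinless // -addnA; congr (_ + (_ + _)).
apply: eq_in_count => j j_l.
have j_in : 0 < j < n by apply: l_in; rewrite inE j_l orbT.
have ij : i.+1 < j by move/allP: i_before => /(_ j j_l).
by rewrite /bare !seat_diner_other //; lia.
Qed.

Definition free occ i := ~~ occ_at occ i.
Definition stranded occ nap i := free occ i && bare nap i.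
Definition next_seat (x : bool) p := if x == d then p.+2 else p.+1.

(* Invariant of steps W1-W3 just after a diner was seated at [pos p] and took
   the napkin on side [x]. *)
Record trap_state p x occ nap : Prop := TrapState {
  trap_lt : p < n;
  trap_occ0 : occ_at occ 0;
  trap_occp : occ_at occ p;
  trap_free_ahead : forall i, p < i < n -> free occ i;
  trap_nap_ahead : forall j, p < j < n -> nap_at nap j;
  trap_nap_here : nap_at nap p = (x != d);
  trap_no_free_pair : forall i, 0 < i < p -> occ_at occ i || occ_at occ i.+1 }.

Lemma trap_cons p x occ nap y ps cnt :
  trap n d occ nap (pos p) (Some x) (y :: ps) cnt =
    if free occ p.+1 && free occ p.+2 then
      let s := next_seat x p in
      let r := seat_diner n nap (pos s) y in
      trap n d (set_nth true occ (pos s) true) r.1 (pos s) r.2 ps (cnt + (r.2 == None))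
    else fill n nap (map pos (filter (free occ) (iota 1 n.-1))) (y :: ps) cnt.
Proof.
by rewrite /= /empty_seats filter_map /next_seat -[Some x == Some d]/(x == d); case: (x == d).
Qed.

Section TrapStep.
Variables (p : nat) (x y : bool) (occ nap : seq bool).
Hypotheses (st : trap_state p x occ nap) (room : p.+2 < n).

Local Notation s := (next_seat x p).
Local Notation k := (pref_napkin y s).
Local Notation occ' := (set_nth true occ (pos s) true).
Local Notation nap' := (set_nth false nap (nid k) false).

Let s_cases : (x == d) && (s == p.+2) || (x != d) && (s == p.+1).
Proof. by rewrite /next_seat; case: (x == d); rewrite eqxx. Qed.

Let s_lt : s < n.
Proof. by case/orP: s_cases => /andP[_ /eqP ->]; lia. Qed.

Let k_ge : p <= k <= s.
Proof. by rewrite /pref_napkin; case: (y == d); case/orP: s_cases => /andP[_ /eqP ->]; lia. Qed.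

Let occ'E i : i < n -> occ_at occ' i = (i == s) || occ_at occ i.
Proof. by move=> i_lt; rewrite occ_at_sit. Qed.

Let nap'E j : j < n -> nap_at nap' j = (j != k) && nap_at nap j.
Proof. by move=> j_lt; rewrite nap_at_take //; lia. Qed.

Let nap_k : nap_at nap k.
Proof.
have [p_lt_k|k_eq_p] : p < k \/ k = p by lia.
  by apply: (trap_nap_ahead st); lia.
rewrite k_eq_p (trap_nap_here st); move: k_eq_p; rewrite /pref_napkin.
by case: (y == d); case/orP: s_cases => /andP[-> /eqP ->] //=; lia.
Qed.

Lemma trap_step ps cnt :
  trap n d occ nap (pos p) (Some x) (y :: ps) cnt =
    trap n d occ' nap' (pos s) (Some y) ps cnt.
Proof.
have [free1 free2] : free occ p.+1 /\ free occ p.+2.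
  by split; apply: (trap_free_ahead st); lia.
rewrite trap_cons free1 free2 /= seat_diner_pref ?addn0 //.
by case/orP: s_cases => /andP[_ /eqP ->]; lia.
Qed.

Lemma trap_state_step : trap_state s y occ' nap'.
Proof.
have [_ occ0 occp free_ahead nap_ahead _ no_pair] := st.
split=> [|||i /andP[s_lt_i i_lt]|j /andP[s_lt_j j_lt]||i /andP[i_gt0 i_lt_s]].
- exact: s_lt.
- by rewrite occ'E // occ0 orbT.
- by rewrite occ'E // eqxx.
- have i_neq : i != s by apply/eqP; lia.
  by rewrite /free occ'E // (negbTE i_neq); apply: free_ahead; lia.
- have j_neq : j != k by apply/eqP; lia.
  by rewrite nap'E // j_neq; apply: nap_ahead; lia.
- rewrite nap'E // /pref_napkin; case: (y == d); rewrite ?eqxx //=.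
  have -> : s != s.-1 by apply/eqP; lia.
  by apply: nap_ahead; lia.
- rewrite !occ'E; try lia.
  have [i_lt_p|[->|i_eq]] : i < p \/ i = p \/ i = p.+1 by lia.
  + by case/orP: (no_pair i (introT andP (conj i_gt0 i_lt_p))) => ->; rewrite !orbT.
  + by rewrite occp orbT.
  + have s_eq : s = p.+2 by case/orP: s_cases => /andP[_ /eqP s_eq]; lia.
    by rewrite i_eq s_eq eqxx orbT.
Qed.

Let iota_s : iota 1 s = iota 1 p ++ (if x == d then [:: p.+1; p.+2] else [:: p.+1]).
Proof.
rewrite /next_seat; case: (x == d); [have := iotaD 1 p 2 | have := iotaD 1 p 1].
  by rewrite addn2 add1n.
by rewrite addn1 add1n.
Qed.

Let occ_before : {in iota 1 p, forall i, occ_at occ' i = occ_at occ i}.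
Proof.
move=> i; rewrite mem_iota => /andP[_ i_le]; rewrite occ'E; last lia.
by have -> : i == s = false by apply/eqP; lia.
Qed.

Lemma count_stranded_step :
  count (stranded occ' nap') (iota 1 s) =
    count (stranded occ nap) (iota 1 p) + ((x == d) && (y != d)).
Proof.
rewrite iota_s count_cat; congr (_ + _).
  apply: eq_in_count => i i_in; rewrite /stranded /bare /free occ_before //.
  move: i_in; rewrite mem_iota => /andP[i_gt0 i_le].
  have [->|i_lt_p] : i = p \/ i < p by lia.
    by rewrite (trap_occp st).
  have [ne1 ne2] : i != k /\ i.-1 != k by split; apply/eqP; lia.
  by rewrite !nap'E ?ne1 ?ne2 //; lia.
have occ_p1 : occ_at occ p.+1 = false by apply/negbTE/(trap_free_ahead st); lia.
have nap_p1 : nap_at nap p.+1 by apply: (trap_nap_ahead st); lia.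
have := trap_nap_here st.
by case xd: (x == d) => /=;
  rewrite /stranded /bare /free !occ'E ?nap'E /next_seat /pref_napkin ?xd; case: (y == d) => /=; lia.
Qed.

Lemma count_free_step :
  (count (free occ') (iota 1 s) + (n.-1 - s)).+1 =
    count (free occ) (iota 1 p) + (n.-1 - p).
Proof.
rewrite iota_s count_cat (eq_in_count (a2 := free occ)); last first.
  by move=> i i_in; rewrite /free occ_before.
have occ_p1 : occ_at occ p.+1 = false by apply/negbTE/(trap_free_ahead st); lia.
by case xd: (x == d) => /=; rewrite /free !occ'E; lia.
Qed.

End TrapStep.

Lemma trap_state_init :
  trap_state 0 d (set_nth false (nseq n false) 0 true)
    (set_nth false (nseq n true) (nid 0) false).
Proof.
have occ0E : set_nth false (nseq n false) 0 true = true :: nseq n.-1 false.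
  by case: (n) n_gt0.
split=> //; rewrite /occ_at ?occ0E //; last by move=> i; lia.
- move=> i /andP[i_gt0 i_lt]; rewrite /free /occ_at; case pos_i: (pos i) => [|k] /=.
    by have := pos_inj i_lt n_gt0 pos_i; lia.
  by rewrite nth_nseq; have := pos_lt i_lt; rewrite pos_i; case: ifP => //; lia.
- move=> j /andP[j_gt0 j_lt].
  rewrite /nap_at nth_set_nth /= nth_nseq nid_lt //; case: eqP => // /nid_inj.
  by move/(_ j_lt n_gt0); lia.
- by rewrite /nap_at nth_set_nth /= eqxx eqxx.
Qed.


Lemma trap_stop p x occ nap y ps cnt : trap_state p x occ nap -> n <= p.+2 ->
  size (y :: ps) = count (free occ) (iota 1 p) + (n.-1 - p) ->
  trap n d occ nap (pos p) (Some x) (y :: ps) cnt = cnt + count (stranded occ nap) (iota 1 p).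
Proof.
move=> [p_lt occ0 occp free_ahead nap_ahead _ no_pair] stop size_ps.
have blocked : free occ p.+1 && free occ p.+2 = false.
  have occn : occ_at occ n by rewrite /occ_at pos_n.
  have [<-|<-] : n = p.+1 \/ n = p.+2 by lia.
    by rewrite /free occn.
  by rewrite /free occn andbF.
rewrite trap_cons blocked.
have iota_n : iota 1 n.-1 = iota 1 p ++ iota p.+1 (n.-1 - p).
  by have := iotaD 1 p (n.-1 - p); rewrite subnKC ?add1n //; lia.
have all_free : count (free occ) (iota p.+1 (n.-1 - p)) = n.-1 - p.
  rewrite (eq_in_count (a2 := predT)) ?count_predT ?size_iota // => i.
  by rewrite mem_iota => i_in; apply: free_ahead; lia.
rewrite fill_isolated; first last.
- by rewrite size_filter iota_n count_cat all_free size_ps.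
- apply: filter_iota_pairwise => i i_ge i_lt.
  have [i_lt_p|->] : i < p \/ i = p by lia.
    by rewrite /free -negb_or negbK no_pair //; lia.
  by rewrite /free occp.
- by move=> i; rewrite mem_filter mem_iota => /andP[_]; lia.
rewrite count_filter iota_n count_cat addnA -[RHS]addn0; congr (_ + _ + _).
  by apply: eq_count => i; rewrite /stranded andbC.
rewrite (eq_in_count (a2 := pred0)) ?count_pred0 // => i.
by rewrite mem_iota /= /bare => i_in; rewrite nap_ahead ?andbF //; lia.
Qed.

Lemma trap_count ps p x occ nap cnt : trap_state p x occ nap ->
  size ps = count (free occ) (iota 1 p) + (n.-1 - p) ->
  trap n d occ nap (pos p) (Some x) ps cnt =
    cnt + count (stranded occ nap) (iota 1 p) + trap_loss (n.-1 - p) (x == d) [seq y == d | y <- ps].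
Proof.
elim: ps p x occ nap cnt => [|y ps IH] p x occ nap cnt st size_ps.
  have : count (stranded occ nap) (iota 1 p) <= count (free occ) (iota 1 p).
    by apply: sub_count => i /andP[].
  by move: size_ps => /=; lia.
have [room|stop] := ltnP p.+2 n.
  rewrite trap_step // IH; first last.
  - by have := count_free_step y st room; rewrite -size_ps /=; lia.
  - exact: trap_state_step.
  rewrite count_stranded_step // map_cons trap_loss_cons; last lia.
  have -> : n.-1 - p - (if x == d then 2 else 1) = n.-1 - next_seat x p.
    by rewrite /next_seat; case: (x == d); lia.
  lia.
by rewrite trap_stop // trap_loss_short ?addn0 //; lia.
Qed.

End Seating.

Lemma nuW_cons n p ps : 0 < n -> size ps = n.-1 ->
  nuW n (p :: ps) = trap_loss n.-1 true [seq y == p | y <- ps].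
Proof.
move=> n_gt0 size_ps.
rewrite /nuW /seat_diner -[napk n p 0]/(napk n p (pos n p 0)) napk_pos0 //.
rewrite nth_nseq nid_lt //= -[trap _ _ _ _ 0]/(trap _ _ _ _ (pos n p 0)).
rewrite trap_count ?eqxx ?subn0 //; first exact: trap_state_init.
Qed.

Local Open Scope ring_scope.

Lemma sum_tuple_cons (R : nmodType) (T : finType) (F : seq T -> R) k :
  \sum_(t : k.+1.-tuple T) F t = \sum_(x : T) \sum_(t : k.-tuple T) F (x :: t).
Proof.
rewrite pair_big /= (reindex (fun xt : T * k.-tuple T => [tuple of xt.1 :: xt.2])) /=.
  by apply: eq_bigr => -[x t] _.
exists (fun t : k.+1.-tuple T => (thead t, [tuple of behead t])) => [[x t]|t] _ /=.
  by rewrite theadE; congr pair; apply: val_inj.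
by rewrite [in RHS](tuple_eta t); apply: val_inj.
Qed.

Definition loss_gf m c k : {poly int} := \sum_(t : k.-tuple bool) 'X^(trap_loss m c t).

Lemma loss_gf_short m c k : (m < 2)%N -> loss_gf m c k = (2 ^ k)%:R.
Proof.
move=> m_lt; rewrite /loss_gf (eq_bigr (fun _ => 1)) => [|t _]; last by rewrite trap_loss_short.
by rewrite sumr_const card_tuple card_bool.
Qed.

Lemma loss_gf_cons m c k : (2 <= m)%N ->
  loss_gf m c k.+1 = \sum_(b : bool) 'X^(c && ~~ b) * loss_gf (m - (if c then 2 else 1)) b k.
Proof.
move=> m_ge; rewrite /loss_gf (sum_tuple_cons (fun s => 'X^(trap_loss m c s))); apply: eq_bigr => b _.
by rewrite mulr_sumr; apply: eq_bigr => t _; rewrite trap_loss_cons // exprD.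
Qed.

Lemma loss_gf_surplus m c e : loss_gf m c (m + e) = (2 ^ e)%:R * loss_gf m c m.
Proof.
elim/ltn_ind: m c e => m IH c e.
have [m_lt|m_ge] := ltnP m 2.
  by rewrite !loss_gf_short // -natrM -expnD addnC.
case: m IH m_ge => [//|k] IH k_ge.
rewrite addSn !loss_gf_cons // mulr_sumr; apply: eq_bigr => b _; rewrite mulrCA; congr (_ * _).
case: c; last by rewrite subn1 IH.
have lt : (k.+1 - 2 < k.+1)%N by lia.
have [e1 e2] : (k.+1 - 2 + e.+1 = k + e)%N /\ (k.+1 - 2 + 1 = k)%N by lia.
move: (IH _ lt b e.+1) (IH _ lt b 1); rewrite e1 e2 => -> ->.
by rewrite mulrA -natrM -expnD addn1.
Qed.

Lemma loss_gf_relabel m c k b :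
  \sum_(t : k.-tuple bool) 'X^(trap_loss m c [seq y == b | y <- t]) = loss_gf m c k.
Proof.
have relabelK : involutive (fun t : k.-tuple bool => [tuple of [seq y == b | y <- t]]).
  move=> t; apply: val_inj => /=; rewrite -map_comp -[RHS]map_id.
  by apply: eq_map => y /=; case: y; case: b.
rewrite /loss_gf (reindex_inj (inv_inj relabelK)); apply: eq_bigr => t _.
by rewrite -[in RHS](relabelK t).
Qed.

Definition jump_gf m := loss_gf m true m.
Definition step_gf m := loss_gf m false m.

Lemma Wpoly_jump m : Wpoly m.+1 = 2%:R * jump_gf m.
Proof.
have first_diner b : \sum_(t : m.-tuple bool) 'X^(nuW m.+1 (b :: t)) = jump_gf m.
  rewrite /jump_gf -(loss_gf_relabel m true m b); apply: eq_bigr => t _.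
  by rewrite nuW_cons // size_tuple.
rewrite /Wpoly (sum_tuple_cons (fun s => 'X^(nuW m.+1 s))) big_bool.
by rewrite !first_diner mulr_natl mulr2n.
Qed.

Lemma jump_gf_rec m : jump_gf m.+2 = 2%:R * jump_gf m + 2%:R * 'X * step_gf m.
Proof.
rewrite /jump_gf /step_gf loss_gf_cons // big_bool /= subn2 /= -(addn1 m).
by rewrite !loss_gf_surplus expr0 expr1 mul1r mulrA [_ * 2%:R]mulrC.
Qed.

Lemma step_gf_rec m : step_gf m.+1 = jump_gf m + step_gf m.
Proof.
case: m => [|m]; first by rewrite /jump_gf /step_gf !loss_gf_short.
by rewrite /jump_gf /step_gf loss_gf_cons // big_bool /= subn1 !expr0 !mul1r.
Qed.

Theorem proposition2 (n : nat) (hn : (4 <= n)%N) :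
  Wpoly n = Wpoly (n - 1)%N + 2%:R * Wpoly (n - 2)%N + 2%:R * ('X - 1) * Wpoly (n - 3)%N.
Proof.
case: n hn => [|[|[|[|m]]]] // _.
rewrite !subSS !subn0 !Wpoly_jump !jump_gf_rec step_gf_rec.
ring.
Qed.
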